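(* There exists $n_0$ such that for all $n\ge n_0$, $\operatorname{op}_{n,4}(123) > \operatorname{op}_{n,3}(123)$.
   Context: An ordered set partition of $[n]$ into $k$ blocks is a sequence $B_1/B_2/\cdots/B_k$ of nonempty, pairwise disjoint subsets of $[n]$ whose union is $[n]$; the order of the blocks matters, but not the order of elements within a block. Such a partition contains the pattern $123$ if there are block indices $i_1<i_2<i_3$ and elements $b_j\in B_{i_j}$ with $b_1<b_2<b_3$; otherwise it avoids $123$. $\operatorname{op}_{n,k}(123)$ is the number of $123$-avoiding ordered partitions of $[n]$ into $k$ blocks. *)

From mathcomp Require Import all_boot.
Set Implicit Arguments. Unset Strict Implicit. Unset Printing Implicit Defensive.

(* An ordered set partition B_1/.../B_k of [n] is encoded by its block-assignment
   function f : 'I_n -> 'I_k (element x, standing for x+1 in [n], lies in block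
   B_{f x + 1}).  Blocks are nonempty iff f is surjective; disjointness and
   covering are automatic.  This is a bijection with ordered set partitions. *)
Definition ord_partition (n k : nat) (f : {ffun 'I_n -> 'I_k}) : bool :=
  [forall j : 'I_k, exists x : 'I_n, f x == j].

Definition contains123 (n k : nat) (f : {ffun 'I_n -> 'I_k}) : bool :=
  [exists b1 : 'I_n, exists b2 : 'I_n, exists b3 : 'I_n,
     [&& b1 < b2, b2 < b3, f b1 < f b2 & f b2 < f b3]].

Definition op123 (n k : nat) : nat :=
  #|[set f : {ffun 'I_n -> 'I_k} | ord_partition f && ~~ contains123 f]|.

From mathcomp Require Import all_boot.
From mathcomp Require Import zify.

Set Implicit Arguments. Unset Strict Implicit. Unset Printing Implicit Defensive.

(* Take a 123-avoiding partition into k blocks and an element p that is not the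
   largest element of its block B.  Moving the elements <= p of B into a new
   block right after B, and keeping the elements > p in B, gives a
   123-avoiding partition into k+1 blocks; it determines the pair (partition, p)
   once the index of B is known.  Since at most k elements are last in their
   block, (n - k) op_{n,k} <= k op_{n,k+1}, which for k = 3 and n >= 7 gives
   4 op_{n,3} <= 3 op_{n,4}. *)

Definition avoiders (n k : nat) :=
  [set f : {ffun 'I_n -> 'I_k} | ord_partition f && ~~ contains123 f].

Lemma op123E n k : op123 n k = #|avoiders n k|.
Proof. by []. Qed.

Section SplitBlock.
Variables n k : nat.
Implicit Types (w : {ffun 'I_n -> 'I_k}) (p x y : 'I_n).

Definition has_later_blockmate w p : bool :=
  [exists q : 'I_n, (p < q) && (w q == w p)].

Definition split_index w p x : nat :=
  w x + (w p < w x) + ((w p == w x :> nat) && (x <= p)).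

Lemma split_index_lt w p x : split_index w p x < k.+1.
Proof.
rewrite /split_index; have := ltn_ord (w x).
by case: (ltngtP (w p) (w x)); case: (x <= p) => /=; lia.
Qed.

Definition split_block w p : {ffun 'I_n -> 'I_k.+1} :=
  [ffun x => inord (split_index w p x)].

Lemma split_blockE w p x : split_block w p x = split_index w p x :> nat.
Proof. by rewrite ffunE inordK // split_index_lt. Qed.

Lemma split_index_mono w p x y :
  x < y -> split_index w p x < split_index w p y -> w x < w y.
Proof.
move=> lt_xy; rewrite /split_index.
case: (ltngtP (w p) (w x)) => /= ?; case: (ltngtP (w p) (w y)) => /= ?;
case: (leqP x p) => /= ?; case: (leqP y p) => /= ?; lia.
Qed.

Lemma split_indexK w p x :
  w x = (if split_index w p x <= w p then split_index w p x
         else (split_index w p x).-1) :> nat.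
Proof.
rewrite /split_index.
by case: (ltngtP (w p) (w x)) => /= ?; case: (leqP x p) => /= ?; case: ifP; lia.
Qed.

Lemma split_block_avoids w p :
  ~~ contains123 w -> ~~ contains123 (split_block w p).
Proof.
apply: contra => /existsP [b1 /existsP [b2 /existsP [b3]]].
rewrite !split_blockE => /and4P [lt12 lt23 f12 f23].
apply/existsP; exists b1; apply/existsP; exists b2; apply/existsP; exists b3.
by rewrite lt12 lt23 (split_index_mono lt12 f12) (split_index_mono lt23 f23).
Qed.

Lemma split_block_partition w p :
  ord_partition w -> has_later_blockmate w p -> ord_partition (split_block w p).
Proof.
move=> /forallP onto /existsP [q /andP [lt_pq /eqP wq]].
apply/forallP => j; apply/existsP.
have ltj := ltn_ord j; have ltwp := ltn_ord (w p).
have hit x : split_index w p x = j -> exists y, split_block w p y == j.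
  by move=> hx; exists x; apply/eqP/val_inj; rewrite /= split_blockE.
case: (ltngtP j (w p)) => [lt_jp | lt_pj | eq_jp].
- have /existsP [x /eqP wx] := onto (Ordinal (ltn_trans lt_jp ltwp)).
  by apply: (hit x); rewrite /split_index wx /=; case: (ltngtP (w p) j) => /=; lia.
- case: (ltngtP j (w p).+1) => [? | gt_j | eq_j]; first lia.
  + have lt_jk : j.-1 < k by lia.
    have /existsP [x /eqP wx] := onto (Ordinal lt_jk).
    by apply: (hit x); rewrite /split_index wx /=; case: (ltngtP (w p) j.-1) => /=; lia.
  + by apply: (hit p); rewrite /split_index eqxx ltnn leqnn /=; lia.
- by apply: (hit q); rewrite /split_index wq eqxx ltnn leqNgt lt_pq /=; lia.
Qed.

Lemma split_block_inj w1 w2 p1 p2 :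
  w1 p1 = w2 p2 -> split_block w1 p1 = split_block w2 p2 -> w1 = w2 /\ p1 = p2.
Proof.
move=> ec es.
have eh x : split_index w1 p1 x = split_index w2 p2 x by rewrite -!split_blockE es.
have ew : w1 = w2.
  apply/ffunP => x; apply: val_inj.
  by rewrite /= (split_indexK w1 p1 x) (split_indexK w2 p2 x) eh ec.
split => //; subst w2.
(* If p1 < p2, splitting at p1 keeps p2 in its block while splitting at p2 moves it. *)
case: (ltngtP p1 p2) => lt12; last exact: val_inj.
- by have := eh p2; rewrite /split_index ec eqxx ltnn leqnn leqNgt lt12 /=; lia.
- by have := eh p1; rewrite /split_index -ec eqxx ltnn leqnn leqNgt lt12 /=; lia.
Qed.

Lemma has_later_blockmate_card w :
  n - k <= #|[set p | has_later_blockmate w p]|.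
Proof.
set G := [set p | has_later_blockmate w p].
have := cardsC G; rewrite card_ord.
suff : #|~: G| <= k by lia.
have w_inj : {in ~: G &, injective w}.
  move=> x y; rewrite !inE => /existsPn Hx /existsPn Hy e.
  case: (ltngtP x y) => lt_xy; last exact: val_inj.
  - by have := Hx y; rewrite lt_xy e eqxx.
  - by have := Hy x; rewrite lt_xy e eqxx.
rewrite -(card_in_imset w_inj).
by have := max_card (mem (w @: ~: G)); rewrite card_ord.
Qed.

Definition split_pairs :=
  [set wp : {ffun 'I_n -> 'I_k} * 'I_n |
     (wp.1 \in avoiders n k) && has_later_blockmate wp.1 wp.2].

Lemma split_pairs_card_ge : (n - k) * #|avoiders n k| <= #|split_pairs|.
Proof.
rewrite -[#|split_pairs|]sum1_card.
rewrite (eq_bigl (fun wp => (wp.1 \in avoiders n k) && has_later_blockmate wp.1 wp.2));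
  last by move=> wp; rewrite inE.
rewrite -(pair_big_dep (mem (avoiders n k)) has_later_blockmate (fun _ _ => 1)) /=.
rewrite mulnC -sum_nat_const; apply: leq_sum => w _.
rewrite sum1_card; apply: leq_trans (has_later_blockmate_card w) _.
by apply: subset_leq_card; apply/subsetP => p; rewrite inE.
Qed.

Lemma split_pairs_card_le : #|split_pairs| <= k * #|avoiders n k.+1|.
Proof.
pose F (wp : {ffun 'I_n -> 'I_k} * 'I_n) := (split_block wp.1 wp.2, wp.1 wp.2).
have F_inj : {in split_pairs &, injective F}.
  move=> [w1 p1] [w2 p2] _ _ [e1 e2].
  by have [-> ->] := split_block_inj e2 e1.
rewrite mulnC -[k in _ * k]card_ord -[#|'I_k|]cardsT -cardsX -(card_in_imset F_inj).
apply: subset_leq_card; apply/subsetP => _ /imsetP [[w p] + ->].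
rewrite !inE /= => /andP [/andP [part avoid] later].
by rewrite split_block_partition // split_block_avoids.
Qed.

End SplitBlock.

Lemma op123_split_bound n k : (n - k) * op123 n k <= k * op123 n k.+1.
Proof.
by rewrite !op123E; apply: leq_trans (split_pairs_card_ge n k) (split_pairs_card_le n k).
Qed.

Lemma op123_gt0 n k : k < n -> 0 < op123 n k.+1.
Proof.
move=> lt_kn; apply/card_gt0P.
exists [ffun x : 'I_n => (inord (k - x) : 'I_k.+1)]; rewrite inE.
apply/andP; split.
- apply/forallP => j; apply/existsP.
  have ltj := ltn_ord j; have lt_x : k - j < n by lia.
  by exists (Ordinal lt_x); apply/eqP/val_inj; rewrite ffunE /= inordK; lia.
- (* block indices never increase along [n], so not even 12 occurs *)
  apply/existsP => -[b1 /existsP [b2 /existsP [b3 /and4P [lt12 _ f12 _]]]].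
  by move: f12; rewrite !ffunE !inordK; lia.
Qed.

Theorem theorem9 : exists n0 : nat, forall n : nat, n0 <= n -> op123 n 3 < op123 n 4.
Proof.
exists 7 => n le7n.
have bound := op123_split_bound n 3.
have pos : 0 < op123 n 4 by apply: op123_gt0; lia.
have : 4 * op123 n 3 <= (n - 3) * op123 n 3 by apply: leq_mul; lia.
lia.
Qed.
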